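(* Let $\mathfrak{R}$ be an alternative ring with a nontrivial idempotent $e_1$, with Peirce decomposition $\mathfrak{R}=\mathfrak{R}_{11}\oplus\mathfrak{R}_{12}\oplus\mathfrak{R}_{21}\oplus\mathfrak{R}_{22}$ relative to $e_1$, and let $\mathcal{D}\colon\mathfrak{R}\to\mathfrak{R}$ be a multiplicative Lie-type derivation of $\mathfrak{R}$. Suppose that $\mathfrak{R}$ satisfies: (i) if $a_{11}\in\mathfrak{R}_{11}$, $a_{22}\in\mathfrak{R}_{22}$ and $[a_{11}+a_{22},x]=0$ for all $x\in\mathfrak{R}_{12}$, then $a_{11}+a_{22}\in\mathcal{Z}(\mathfrak{R})$; (ii) if $a_{11}\in\mathfrak{R}_{11}$, $a_{22}\in\mathfrak{R}_{22}$ and $[a_{11}+a_{22},x]=0$ for all $x\in\mathfrak{R}_{21}$, then $a_{11}+a_{22}\in\mathcal{Z}(\mathfrak{R})$. Then $\mathcal{D}$ is almost additive, i.e. $\mathcal{D}(a+b)-\mathcal{D}(a)-\mathcal{D}(b)\in\mathcal{Z}(\mathfrak{R})$ for all $a,b\in\mathfrak{R}$.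
   Context: Rings are not assumed associative or unital. The associator is $(x,y,z)=(xy)z-x(yz)$; $\mathfrak{R}$ is alternative if $(x,x,y)=0=(y,x,x)$ for all $x,y$. $[x,y]=xy-yx$ and $\mathcal{Z}(\mathfrak{R})=\{r\in\mathfrak{R}: [r,x]=0 \text{ for all } x\in\mathfrak{R}\}$ is the commutative center. Define $p_1(x)=x$ and $p_n(x_1,\dots,x_n)=[p_{n-1}(x_1,\dots,x_{n-1}),x_n]$ for $n\ge 2$. For an integer $n\ge2$, a map $\mathcal{D}\colon\mathfrak{R}\to\mathfrak{R}$ (not necessarily additive) is a multiplicative Lie $n$-derivation if $\mathcal{D}(p_n(x_1,\dots,x_n))=\sum_{i=1}^n p_n(x_1,\dots,x_{i-1},\mathcal{D}(x_i),x_{i+1},\dots,x_n)$ for all $x_1,\dots,x_n\in\mathfrak{R}$; a multiplicative Lie-type derivation is a multiplicative Lie $n$-derivation for some $n\ge 2$. A nontrivial idempotent is an element $e_1\neq0$ with $e_1^2=e_1$ which is not a multiplicative identity of $\mathfrak{R}$. Writing $e_2a:=a-e_1a$ and $ae_2:=a-ae_1$, one has $(e_ia)e_j=e_i(ae_j)$, and $\mathfrak{R}_{ij}=e_i\mathfrak{R}e_j$ ($i,j=1,2$) gives the Peirce decomposition $\mathfrak{R}=\mathfrak{R}_{11}\oplus\mathfrak{R}_{12}\oplus\mathfrak{R}_{21}\oplus\mathfrak{R}_{22}$. *)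

From HB Require Import structures.
From mathcomp Require Import all_boot all_algebra.
Set Implicit Arguments. Unset Strict Implicit. Unset Printing Implicit Defensive.
Import GRing.Theory.
Local Open Scope ring_scope.

(* A (not necessarily associative, not necessarily unital) ring is an
   additive abelian group R : zmodType with a biadditive multiplication mul. *)
Section NonAssoc.
Variables (R : zmodType) (mul : R -> R -> R).

Definition biadditive : Prop :=
  (forall x y z, mul (x + y) z = mul x z + mul y z) /\
  (forall x y z, mul x (y + z) = mul x y + mul x z).

Definition assoc (x y z : R) : R := mul (mul x y) z - mul x (mul y z).

Definition alternative : Prop :=
  forall x y, assoc x x y = 0 /\ assoc y x x = 0.

Definition lie (x y : R) : R := mul x y - mul y x.

Definition in_center (r : R) : Prop := forall x, lie r x = 0.

Fixpoint pcomm (x : nat -> R) (k : nat) : R :=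
  if k is k'.+1 then lie (pcomm x k') (x k) else x 0%N.

(* p_n(x_1,...,x_n) with x_i = x (i-1) *)
Definition p_n (n : nat) (x : nat -> R) : R := pcomm x n.-1.

Definition upd (x : nat -> R) (i : nat) (v : R) : nat -> R :=
  fun j => if j == i then v else x j.

Definition lie_n_derivation (n : nat) (D : R -> R) : Prop :=
  forall x : nat -> R,
    D (p_n n x) = \sum_(i < n) p_n n (upd x i (D (x i))).

Definition lie_type_derivation (D : R -> R) : Prop :=
  exists n, (2 <= n)%N /\ lie_n_derivation n D.

Definition is_idempotent (e : R) : Prop := mul e e = e.

Definition is_mul_identity (e : R) : Prop := forall x, mul e x = x /\ mul x e = x.

Definition nontrivial_idempotent (e : R) : Prop :=
  e != 0 /\ is_idempotent e /\ ~ is_mul_identity e.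

(* Peirce operations relative to e1: e_1 a := e1 a, e_2 a := a - e1 a,
   a e_1 := a e1, a e_2 := a - a e1. *)
Definition peL (e1 : R) (i : bool) (a : R) : R := if i then mul e1 a else a - mul e1 a.
Definition peR (e1 : R) (j : bool) (a : R) : R := if j then mul a e1 else a - mul a e1.

(* Peirce component R_ij = e_i R e_j  (i, j = true for 1, false for 2) *)
Definition peirce (e1 : R) (i j : bool) (x : R) : Prop :=
  exists a, x = peR e1 j (peL e1 i a).

Definition almost_additive (D : R -> R) : Prop :=
  forall a b, in_center (D (a + b) - D a - D b).
End NonAssoc.

From Pilot Require Import Defs.
From mathcomp Require Import all_boot all_algebra.
Set Implicit Arguments. Unset Strict Implicit. Unset Printing Implicit Defensive.
Import GRing.Theory.
Local Open Scope ring_scope.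

(* Write S(a, b) = D(a + b) - D a - D b.  Since p_n is additive in each slot
   and D is a Lie n-derivation, S(p_n(.., a, ..), p_n(.., b, ..)) =
   p_n(.., S(a, b), ..).  Apply this to the probes p_n(a, c, e, ..., e) =
   ad^(n-2) [a, c], where ad y = [y, e].  The map ad kills R11 + R22 and acts on
   R12 + R21 as -1 on R12 and as 1 on R21.  Hence S(a, b) lies in R11 + R22
   once S(p_n(a, e, ..), p_n(b, e, ..)) does, and p_n(a, e, ..) lies in
   R12 + R21; then [S(a, b), c] in R12 vanishes as soon as S of the probes with
   c lies in R11 + R22, so that (i) makes S(a, b) central.  For u, v in
   R12 + R21 one first shows that S(e, x) is central for x in R12 or R21,
   writes u and v as probes p_n(e, y, ..) and p_n(x, e, ..), and uses the
   cocycle identity S(a + b, c) + S(a, b) = S(a, b + c) + S(b, c) with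
   c = p_n(x, y, ..). *)

Section Update.
Variable T : zmodType.

Lemma upd_id (x : nat -> T) j w : upd x j w j = w.
Proof. by rewrite /upd eqxx. Qed.

Lemma upd_neq (x : nat -> T) i j w : i != j -> upd x j w i = x i.
Proof. by rewrite /upd => /negPf ->. Qed.

Lemma upd_upd (x : nat -> T) j w v : upd (upd x j w) j v =1 upd x j v.
Proof. by move=> l; rewrite /upd; case: (l == j). Qed.

Lemma upd_updC (x : nat -> T) i j w v :
  i != j -> upd (upd x j w) i v =1 upd (upd x i v) j w.
Proof.
move=> hij l; rewrite /upd.
by case: (eqVneq l i) => [->|//]; rewrite (negPf hij).
Qed.

End Update.

Section AlternativeRing.
Variables (R : zmodType) (mul : R -> R -> R).
Hypotheses (hbi : biadditive mul) (halt : alternative mul).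

Local Notation "x ⋅ y" := (mul x y) (at level 40, left associativity).
Local Notation lie := (lie mul).
Local Notation assoc := (assoc mul).
Local Notation central := (in_center mul).

Lemma mulDl x y z : (x + y) ⋅ z = x ⋅ z + y ⋅ z. Proof. exact: hbi.1. Qed.
Lemma mulDr x y z : x ⋅ (y + z) = x ⋅ y + x ⋅ z. Proof. exact: hbi.2. Qed.

Lemma mul0x x : 0 ⋅ x = 0.
Proof. by apply: (addrI (0 ⋅ x)); rewrite -mulDl !addr0. Qed.
Lemma mulx0 x : x ⋅ 0 = 0.
Proof. by apply: (addrI (x ⋅ 0)); rewrite -mulDr !addr0. Qed.
Lemma mulNx x y : (- x) ⋅ y = - (x ⋅ y).
Proof. by apply: (addrI (x ⋅ y)); rewrite -mulDl !subrr mul0x. Qed.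
Lemma mulxN x y : x ⋅ (- y) = - (x ⋅ y).
Proof. by apply: (addrI (x ⋅ y)); rewrite -mulDr !subrr mulx0. Qed.
Lemma mulBl x y z : (x - y) ⋅ z = x ⋅ z - y ⋅ z.
Proof. by rewrite mulDl mulNx. Qed.
Lemma mulBr x y z : x ⋅ (y - z) = x ⋅ y - x ⋅ z.
Proof. by rewrite mulDr mulxN. Qed.

Lemma lieDl x y z : lie (x + y) z = lie x z + lie y z.
Proof. by rewrite /Defs.lie mulDl mulDr opprD addrACA. Qed.
Lemma lieDr x y z : lie x (y + z) = lie x y + lie x z.
Proof. by rewrite /Defs.lie mulDl mulDr opprD addrACA. Qed.
Lemma lieNl x y : lie (- x) y = - lie x y.
Proof. by rewrite /Defs.lie mulNx mulxN opprB opprK addrC. Qed.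
Lemma lie0l x : lie 0 x = 0.
Proof. by rewrite /Defs.lie mul0x mulx0 subrr. Qed.
Lemma lie0r x : lie x 0 = 0.
Proof. by rewrite /Defs.lie mul0x mulx0 subrr. Qed.
Lemma lieC x y : lie x y = - lie y x.
Proof. by rewrite /Defs.lie opprB. Qed.
Lemma liexx x : lie x x = 0.
Proof. by rewrite /Defs.lie subrr. Qed.

Lemma assocDl x y z w : assoc (x + y) z w = assoc x z w + assoc y z w.
Proof. by rewrite /Defs.assoc !mulDl opprD addrACA. Qed.
Lemma assocDm x y z w : assoc z (x + y) w = assoc z x w + assoc z y w.
Proof. by rewrite /Defs.assoc !(mulDl, mulDr) opprD addrACA. Qed.
Lemma assocDr x y z w : assoc z w (x + y) = assoc z w x + assoc z w y.
Proof. by rewrite /Defs.assoc !mulDr opprD addrACA. Qed.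

Lemma assoc_swapl x y z : assoc x y z = - assoc y x z.
Proof.
have := (halt (x + y) z).1.
rewrite assocDl !assocDm (halt x z).1 (halt y z).1 add0r addr0.
by move/eqP; rewrite addr_eq0 => /eqP.
Qed.

Lemma assoc_swapr x y z : assoc x y z = - assoc x z y.
Proof.
have := (halt (y + z) x).2.
rewrite assocDr !assocDm (halt y x).2 (halt z x).2 add0r addr0.
by move/eqP; rewrite addr_eq0 => /eqP ->; rewrite opprK.
Qed.

Lemma assoc_cycle x y z : assoc x y z = assoc y z x.
Proof. by rewrite assoc_swapl assoc_swapr opprK. Qed.

Lemma assoc_flex x y : assoc x y x = 0.
Proof. by rewrite assoc_swapr (halt x y).1 oppr0. Qed.

Lemma pcomm_eq x y k : x =1 y -> pcomm mul x k = pcomm mul y k.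
Proof. by move=> h; elim: k => [|k IH] /=; rewrite ?IH h. Qed.

Lemma pcomm_upd_gt x j v k : (k < j)%N -> pcomm mul (upd x j v) k = pcomm mul x k.
Proof.
elim: k => [|k IH] hk /=; first by rewrite upd_neq // ltn_eqF.
by rewrite IH ?(ltnW hk) // upd_neq // ltn_eqF.
Qed.

Lemma pcomm_updD x j u v k : (j <= k)%N ->
  pcomm mul (upd x j (u + v)) k = pcomm mul (upd x j u) k + pcomm mul (upd x j v) k.
Proof.
elim: k => [|k IH] hk /=.
  by move: hk; rewrite leqn0 => /eqP ->; rewrite !upd_id.
have [->|hne] := eqVneq j k.+1; first by rewrite !pcomm_upd_gt // !upd_id lieDr.
rewrite IH; last by rewrite -ltnS ltn_neqAle hne hk.
by rewrite lieDl !upd_neq // eq_sym.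
Qed.

Lemma pcomm_eq0 x j k : (j <= k)%N -> x j = 0 -> pcomm mul x k = 0.
Proof.
elim: k => [|k IH] hk hx /=; first by move: hk; rewrite leqn0 => /eqP <-.
have [<-|hne] := eqVneq j k.+1; first by rewrite hx lie0r.
by rewrite IH ?lie0l // -ltnS ltn_neqAle hne hk.
Qed.

Section Peirce.
Variable e : R.
Hypothesis he : e ⋅ e = e.

(* The Peirce components are described by left and right multiplication by
   [e]; [diagonal] is the set R11 + R22 and [offdiag] the set R12 + R21. *)
Definition R11 c := e ⋅ c = c /\ c ⋅ e = c.
Definition R12 c := e ⋅ c = c /\ c ⋅ e = 0.
Definition R21 c := e ⋅ c = 0 /\ c ⋅ e = c.
Definition R22 c := e ⋅ c = 0 /\ c ⋅ e = 0.
Definition diagonal t := lie t e = 0.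
Definition offdiag u := exists u1 u2, [/\ R12 u1, R21 u2 & u = u1 + u2].
Definition ade y := lie y e.

Lemma R12D x y : R12 x -> R12 y -> R12 (x + y).
Proof. by case=> h1 h2 [h3 h4]; rewrite /R12 mulDl mulDr h1 h2 h3 h4 addr0. Qed.
Lemma R12N x : R12 x -> R12 (- x).
Proof. by case=> h1 h2; rewrite /R12 mulNx mulxN h1 h2 oppr0. Qed.
Lemma R12B x y : R12 x -> R12 y -> R12 (x - y).
Proof. by move=> hx /R12N; apply: R12D. Qed.
Lemma R12_0 : R12 0.
Proof. by rewrite /R12 mul0x mulx0. Qed.

Lemma R21D x y : R21 x -> R21 y -> R21 (x + y).
Proof. by case=> h1 h2 [h3 h4]; rewrite /R21 mulDl mulDr h1 h2 h3 h4 addr0. Qed.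
Lemma R21N x : R21 x -> R21 (- x).
Proof. by case=> h1 h2; rewrite /R21 mulNx mulxN h1 h2 oppr0. Qed.
Lemma R21B x y : R21 x -> R21 y -> R21 (x - y).
Proof. by move=> hx /R21N; apply: R21D. Qed.
Lemma R21_0 : R21 0.
Proof. by rewrite /R21 mul0x mulx0. Qed.

Lemma diagonalD x y : diagonal x -> diagonal y -> diagonal (x + y).
Proof. by rewrite /diagonal lieDl => -> ->; rewrite addr0. Qed.
Lemma diagonalN x : diagonal x -> diagonal (- x).
Proof. by rewrite /diagonal lieNl => ->; rewrite oppr0. Qed.
Lemma diagonalB x y : diagonal x -> diagonal y -> diagonal (x - y).
Proof. by move=> hx /diagonalN; apply: diagonalD. Qed.
Lemma diagonal0 : diagonal 0.
Proof. exact: lie0l. Qed.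
Lemma diagonal_e : diagonal e.
Proof. exact: liexx. Qed.

Lemma diagonal_lie12_21 x c : R12 x -> R21 c -> diagonal (lie x c).
Proof.
case=> ex xe [ec ce].
have A : assoc x e c = 0 by rewrite /Defs.assoc xe ec mul0x mulx0 subrr.
have B : assoc c e x = 0 by rewrite /Defs.assoc ce ex subrr.
have xce : x ⋅ c ⋅ e = x ⋅ c.
  by have := assoc_swapr x c e; rewrite A oppr0 /Defs.assoc ce => /subr0_eq.
have exc : e ⋅ (x ⋅ c) = x ⋅ c.
  by have := assoc_swapl e x c; rewrite A oppr0 /Defs.assoc ex => /subr0_eq.
have cxe : c ⋅ x ⋅ e = 0.
  by have := assoc_swapr c x e; rewrite B oppr0 /Defs.assoc xe mulx0 subr0.
have ecx : e ⋅ (c ⋅ x) = 0.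
  have := assoc_swapl e c x; rewrite B oppr0 /Defs.assoc ec mul0x sub0r.
  by move/eqP; rewrite oppr_eq0 => /eqP.
by rewrite /diagonal /Defs.lie mulBl mulBr xce exc cxe ecx subrr.
Qed.

Lemma mul12_12 x y : R12 x -> R12 y -> R21 (x ⋅ y).
Proof.
case=> ex xe [ey ye].
have A : assoc x e y = - (x ⋅ y) by rewrite /Defs.assoc xe ey mul0x sub0r.
split.
  have := assoc_swapl e x y; rewrite A opprK /Defs.assoc ex.
  by rewrite -[RHS]subr0 => /addrI /oppr_inj.
by have := assoc_swapr x y e; rewrite A opprK /Defs.assoc ye mulx0 subr0.
Qed.

Lemma mul21_21 x y : R21 x -> R21 y -> R12 (x ⋅ y).
Proof.
case=> ex xe [ey ye].
have A : assoc x e y = x ⋅ y by rewrite /Defs.assoc xe ey mulx0 subr0.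
split.
  by have := assoc_swapl e x y; rewrite A /Defs.assoc ex mul0x sub0r => /oppr_inj.
have := assoc_swapr x y e; rewrite A /Defs.assoc ye.
by rewrite -[RHS]add0r => /addIr.
Qed.

Lemma lie12_12 x y : R12 x -> R12 y -> R21 (lie x y).
Proof. by move=> hx hy; apply: R21B; apply: mul12_12. Qed.
Lemma lie21_21 x y : R21 x -> R21 y -> R12 (lie x y).
Proof. by move=> hx hy; apply: R12B; apply: mul21_21. Qed.

Lemma lie11_12 a c : R11 a -> R12 c -> R12 (lie a c).
Proof.
case=> ea ae [ec ce].
have A : assoc a e c = 0 by rewrite /Defs.assoc ae ec subrr.
have ca0 : c ⋅ a = 0.
  have := assoc_cycle c e a.
  rewrite (assoc_swapl e a c) A oppr0 /Defs.assoc ce ea mul0x sub0r.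
  by move/eqP; rewrite oppr_eq0 => /eqP.
rewrite /Defs.lie ca0 subr0; split.
- by have := assoc_swapl e a c; rewrite A oppr0 /Defs.assoc ea => /subr0_eq.
- by have := assoc_swapr a c e; rewrite A oppr0 /Defs.assoc ce mulx0 subr0.
Qed.

Lemma lie22_12 b c : R22 b -> R12 c -> R12 (lie b c).
Proof.
case=> eb be [ec ce].
have B : assoc c e b = 0 by rewrite /Defs.assoc ce eb mul0x mulx0 subrr.
have bc0 : b ⋅ c = 0.
  have := assoc_cycle b e c.
  rewrite (assoc_swapl e c b) B oppr0 /Defs.assoc be ec mul0x sub0r.
  by move/eqP; rewrite oppr_eq0 => /eqP.
rewrite /Defs.lie bc0 sub0r; apply: R12N; split.
- by have := assoc_swapl e c b; rewrite B oppr0 /Defs.assoc ec => /subr0_eq.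
- by have := assoc_swapr c b e; rewrite B oppr0 /Defs.assoc be mulx0 subr0.
Qed.

Lemma lie11_21 a c : R11 a -> R21 c -> R21 (lie a c).
Proof.
case=> ea ae [ec ce].
have A : assoc c e a = 0 by rewrite /Defs.assoc ce ea subrr.
have ac0 : a ⋅ c = 0.
  have := assoc_cycle a e c.
  by rewrite (assoc_swapl e c a) A oppr0 /Defs.assoc ae ec mulx0 subr0.
rewrite /Defs.lie ac0 sub0r; apply: R21N; split.
- have := assoc_swapl e c a; rewrite A oppr0 /Defs.assoc ec mul0x sub0r.
  by move/eqP; rewrite oppr_eq0 => /eqP.
- by have := assoc_swapr c a e; rewrite A oppr0 /Defs.assoc ae => /subr0_eq.
Qed.

Lemma lie22_21 b c : R22 b -> R21 c -> R21 (lie b c).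
Proof.
case=> eb be [ec ce].
have A : assoc b e c = 0 by rewrite /Defs.assoc be ec mul0x mulx0 subrr.
have cb0 : c ⋅ b = 0.
  have := assoc_swapr c e b; rewrite (assoc_cycle c b e) A.
  by rewrite oppr0 /Defs.assoc ce eb mulx0 subr0.
rewrite /Defs.lie cb0 subr0; split.
- have := assoc_swapl e b c; rewrite A oppr0 /Defs.assoc eb mul0x sub0r.
  by move/eqP; rewrite oppr_eq0 => /eqP.
- by have := assoc_swapr b c e; rewrite A oppr0 /Defs.assoc ce => /subr0_eq.
Qed.

Lemma mul_eel a : e ⋅ (e ⋅ a) = e ⋅ a.
Proof. by have := (halt e a).1; rewrite /Defs.assoc he => /subr0_eq. Qed.

Lemma mul_eer a : a ⋅ e ⋅ e = a ⋅ e.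
Proof. by have := (halt e a).2; rewrite /Defs.assoc he => /subr0_eq. Qed.

Lemma mul_e_flex a : e ⋅ (a ⋅ e) = e ⋅ a ⋅ e.
Proof. by have := assoc_flex e a; rewrite /Defs.assoc => /subr0_eq. Qed.

Lemma diagonal_decomp t : diagonal t -> exists t1 t2, [/\ R11 t1, R22 t2 & t = t1 + t2].
Proof.
rewrite /diagonal /Defs.lie => /subr0_eq te.
have ete : e ⋅ t ⋅ e = e ⋅ t by rewrite -te mul_eer.
exists (e ⋅ t), (t - e ⋅ t); split; last by rewrite addrC subrK.
- by split; rewrite ?mul_eel ?ete.
- by split; rewrite (mulBr, mulBl) ?mul_eel ?ete ?te subrr.
Qed.

Lemma lie_diagonal12 t c : diagonal t -> R12 c -> R12 (lie t c).
Proof.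
move=> /diagonal_decomp [t1 [t2 [h1 h2 ->]]] hc.
by rewrite lieDl; apply: R12D; [apply: lie11_12 | apply: lie22_12].
Qed.

Lemma lie_diagonal21 t c : diagonal t -> R21 c -> R21 (lie t c).
Proof.
move=> /diagonal_decomp [t1 [t2 [h1 h2 ->]]] hc.
by rewrite lieDl; apply: R21D; [apply: lie11_21 | apply: lie22_21].
Qed.

Lemma R12_peirce a : R12 (e ⋅ a - e ⋅ a ⋅ e).
Proof.
have eeae : e ⋅ (e ⋅ a ⋅ e) = e ⋅ a ⋅ e by rewrite -mul_e_flex mul_eel.
by rewrite /R12 mulBr mulBl mul_eel eeae mul_eer !subrr.
Qed.

Lemma R21_peirce a : R21 (a ⋅ e - e ⋅ a ⋅ e).
Proof.
have eeae : e ⋅ (e ⋅ a ⋅ e) = e ⋅ a ⋅ e by rewrite -mul_e_flex mul_eel.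
by rewrite /R21 mulBr mulBl mul_e_flex eeae !mul_eer !subrr.
Qed.

Lemma peirce12_R12 x : peirce mul e true false x -> R12 x.
Proof. by case=> a ->; apply: R12_peirce. Qed.

Lemma peirce21_R21 x : peirce mul e false true x -> R21 x.
Proof. by case=> a ->; rewrite /peR /peL mulBl; apply: R21_peirce. Qed.

Lemma peirce_diagonal_sum t : diagonal t ->
  peR mul e true (peL mul e true t) + peR mul e false (peL mul e false t) = t.
Proof.
rewrite /diagonal /Defs.lie /peR /peL => /subr0_eq te.
have ete : e ⋅ t ⋅ e = e ⋅ t by rewrite -te mul_eer.
by rewrite mulBl ete te subrr subr0 addrC subrK.
Qed.

Definition peirce_center_test (i j : bool) := forall a11 a22,
  peirce mul e true true a11 -> peirce mul e false false a22 ->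
  (forall x, peirce mul e i j x -> lie (a11 + a22) x = 0) -> central (a11 + a22).

Lemma diagonal_central12 : peirce_center_test true false ->
  forall t, diagonal t -> (forall c, R12 c -> lie t c = 0) -> central t.
Proof.
move=> hi t hd hc; rewrite -(peirce_diagonal_sum hd).
apply: hi; [by exists t | by exists t | move=> x /peirce12_R12].
by rewrite peirce_diagonal_sum //; apply: hc.
Qed.

Lemma diagonal_central21 : peirce_center_test false true ->
  forall t, diagonal t -> (forall c, R21 c -> lie t c = 0) -> central t.
Proof.
move=> hii t hd hc; rewrite -(peirce_diagonal_sum hd).
apply: hii; [by exists t | by exists t | move=> x /peirce21_R21].
by rewrite peirce_diagonal_sum //; apply: hc.
Qed.

Lemma ade12 y : R12 y -> ade y = - y.
Proof. by case=> h1 h2; rewrite /ade /Defs.lie h1 h2 sub0r. Qed.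
Lemma ade21 y : R21 y -> ade y = y.
Proof. by case=> h1 h2; rewrite /ade /Defs.lie h1 h2 subr0. Qed.

Lemma offdiag12 u : R12 u -> offdiag u.
Proof. by move=> h; exists u, 0; split; rewrite ?addr0 //; apply: R21_0. Qed.
Lemma offdiag21 u : R21 u -> offdiag u.
Proof. by move=> h; exists 0, u; split; rewrite ?add0r //; apply: R12_0. Qed.

Lemma offdiag_ade a : offdiag (ade a).
Proof.
exists (- (e ⋅ a - e ⋅ a ⋅ e)), (a ⋅ e - e ⋅ a ⋅ e).
split; [exact/R12N/R12_peirce | exact: R21_peirce |].
by rewrite /ade /Defs.lie opprB [RHS]addrC subrKA.
Qed.

Lemma offdiag_diagonal_eq0 u : offdiag u -> diagonal u -> u = 0.
Proof.
case=> [u1 [u2 [h1 h2 ->]]].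
rewrite /diagonal -/(ade _) /ade lieDl -!/(ade _) ade12 // ade21 // addrC.
move=> /subr0_eq u21; have : e ⋅ u2 = e ⋅ u1 by rewrite u21.
by rewrite h1.1 h2.1 => u10; rewrite u21 -u10 addr0.
Qed.

Lemma iter_adeD k x y : iter k ade (x + y) = iter k ade x + iter k ade y.
Proof. by elim: k => //= k ->; apply: lieDl. Qed.
Lemma iter_ade0 k : iter k ade 0 = 0.
Proof. by elim: k => //= k ->; apply: lie0l. Qed.

Lemma diagonal_iter_ade k y : diagonal y -> diagonal (iter k ade y).
Proof. by case: k => // k hy; rewrite iterSr [ade y]hy iter_ade0; apply: diagonal0. Qed.

Lemma R12_iter_ade k y : R12 y -> R12 (iter k ade y).
Proof. by move=> hy; elim: k => //= k IH; rewrite ade12 //; apply: R12N. Qed.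

Lemma iter_ade21 k y : R21 y -> iter k ade y = y.
Proof. by move=> hy; elim: k => //= k ->; apply: ade21. Qed.

Lemma offdiag_iter_ade_eq0 k w : offdiag w -> diagonal (iter k ade w) -> w = 0.
Proof.
elim: k w => [|k IH] w hw; first exact: offdiag_diagonal_eq0.
by rewrite iterSr => /(IH _ (offdiag_ade w)); apply: offdiag_diagonal_eq0.
Qed.

Lemma iter_ade12_surj k v : R12 v -> exists2 x, R12 x & iter k ade x = v.
Proof.
elim: k v => [|k IH] v hv; first by exists v.
have [x hx <-] := IH v hv; exists (- x); first exact: R12N.
by rewrite iterSr ade12 ?opprK //; apply: R12N.
Qed.

Definition pn_args a c (j : nat) : R := match j with 0 => a | 1 => c | _ => e end.

Lemma pcomm_pn_args a c k : pcomm mul (pn_args a c) k.+1 = iter k ade (lie a c).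
Proof. by elim: k => //= k ->. Qed.

Lemma upd_pn_args0 a c w : upd (pn_args a c) 0 w =1 pn_args w c.
Proof. by case. Qed.

Lemma upd_pn_args1 a c w : upd (pn_args a c) 1 w =1 pn_args a w.
Proof. by case=> [|[]]. Qed.

Section LieDerivation.
Variables (m : nat) (D : R -> R).

Definition leibniz_term (x : nat -> R) (i : nat) := pcomm mul (upd x i (D (x i))) m.+1.

Hypothesis hD : forall x, D (pcomm mul x m.+1) = \sum_(i < m.+2) leibniz_term x i.

Definition defect a b := D (a + b) - D a - D b.

Lemma D_add a b : D (a + b) = D a + D b + defect a b.
Proof. by rewrite /defect [RHS]addrC -[_ - D a - D b]addrA -opprD subrK. Qed.

Lemma D0 : D 0 = 0.
Proof.
have := hD (fun _ => 0); rewrite (pcomm_eq0 (j := 0)) // big1 // => -[[|i] hi] _.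
  exact: (pcomm_eq0 (j := 1)).
exact: (pcomm_eq0 (j := 0)).
Qed.

Lemma leibniz_term_defect x j a b i : (j <= m.+1)%N ->
  leibniz_term (upd x j (a + b)) i - leibniz_term (upd x j a) i
    - leibniz_term (upd x j b) i
  = if i == j then pcomm mul (upd x j (defect a b)) m.+1 else 0.
Proof.
move=> hj; rewrite /leibniz_term.
have [->|hij] := eqVneq i j.
  rewrite !upd_id !(pcomm_eq _ (upd_upd _ _ _ _)) D_add !pcomm_updD //.
  by rewrite -addrA -opprD addrAC subrr add0r.
rewrite !upd_neq // !(pcomm_eq _ (upd_updC _ _ _ hij)) pcomm_updD //.
by rewrite addrAC addrK subrr.
Qed.

Lemma defect_pcomm x j a b : (j < m.+2)%N ->
  defect (pcomm mul (upd x j a) m.+1) (pcomm mul (upd x j b) m.+1)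
  = pcomm mul (upd x j (defect a b)) m.+1.
Proof.
move=> hj; rewrite /defect -pcomm_updD // !hD -!sumrB.
under eq_bigr => i _ do rewrite leibniz_term_defect //.
by rewrite -big_mkcond (big_pred1 (Ordinal hj)).
Qed.

(* [pn a c] is the probe p_(m+2)(a, c, e, ..., e). *)
Definition pn a c := iter m ade (lie a c).

Lemma defect_pnl a b c : defect (pn a c) (pn b c) = pn (defect a b) c.
Proof.
have := defect_pcomm (pn_args a c) a b (j := 0) erefl.
by rewrite /pn -!pcomm_pn_args !(pcomm_eq _ (upd_pn_args0 _ _ _)).
Qed.

Lemma defect_pnr a c c' : defect (pn a c) (pn a c') = pn a (defect c c').
Proof.
have := defect_pcomm (pn_args a c) c c' (j := 1) erefl.
by rewrite /pn -!pcomm_pn_args !(pcomm_eq _ (upd_pn_args1 _ _ _)).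
Qed.

Lemma defectC a b : defect a b = defect b a.
Proof. by rewrite /defect [b + a]addrC addrAC. Qed.

Lemma defect0x b : defect 0 b = 0.
Proof. by rewrite /defect add0r D0 subr0 subrr. Qed.

Lemma defect_cocycle a b c :
  defect (a + b) c = defect a (b + c) + defect b c - defect a b.
Proof.
rewrite /defect addrA !opprB !addrA subrK (addrAC _ (- D c) (D b)) subrK.
by rewrite (addrAC _ (- D c) (D a)) subrK [RHS]addrAC.
Qed.

Lemma diagonal_defect_split a b c :
  diagonal (defect (a + b) c) -> diagonal (defect a (b + c)) ->
  diagonal (defect b c) -> diagonal (defect a b).
Proof.
move=> h1 h2 h3.
have -> : defect a b = defect a (b + c) + defect b c - defect (a + b) c.
  by rewrite defect_cocycle opprB addrC subrK.
by apply: diagonalB => //; apply: diagonalD.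
Qed.

Lemma diagonal_defect_addl a b c :
  diagonal (defect a (b + c)) -> diagonal (defect b c) ->
  diagonal (defect a b) -> diagonal (defect (a + b) c).
Proof.
by rewrite defect_cocycle => h1 h2 h3; apply: diagonalB => //; apply: diagonalD.
Qed.

Lemma diagonal_defect_addr a b c :
  diagonal (defect (a + b) c) -> diagonal (defect b c) ->
  diagonal (defect a b) -> diagonal (defect a (b + c)).
Proof.
move=> h1 h2 h3.
have -> : defect a (b + c) = defect (a + b) c + defect a b - defect b c.
  by rewrite defect_cocycle subrK addrK.
by apply: diagonalB => //; apply: diagonalD.
Qed.

Lemma pnDr a c c' : pn a (c + c') = pn a c + pn a c'.
Proof. by rewrite /pn lieDr iter_adeD. Qed.

Lemma pn_ee : pn e e = 0.
Proof. by rewrite /pn liexx iter_ade0. Qed.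

Lemma pn_xe x : pn x e = iter m.+1 ade x.
Proof. by rewrite iterSr. Qed.

Lemma pn_e12 y : R12 y -> pn e y = iter m ade y.
Proof. by case=> h1 h2; rewrite /pn /Defs.lie h1 h2 subr0. Qed.

Lemma pn_e21 y : R21 y -> pn e y = - y.
Proof.
case=> h1 h2; rewrite /pn /Defs.lie h1 h2 sub0r iter_ade21 //.
exact: R21N.
Qed.

Lemma pn_central_l z c : central z -> pn z c = 0.
Proof. by move=> hz; rewrite /pn hz iter_ade0. Qed.

Lemma pn_central_r a z : central z -> pn a z = 0.
Proof. by move=> hz; rewrite /pn lieC hz oppr0 iter_ade0. Qed.

Lemma diagonal_pn a c : diagonal (lie a c) -> diagonal (pn a c).
Proof. exact: diagonal_iter_ade. Qed.

Lemma offdiag_pn_e a : offdiag (pn a e).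
Proof. by rewrite pn_xe iterS; apply: offdiag_ade. Qed.

Lemma diagonal_defect_pn_e a b :
  diagonal (defect (pn a e) (pn b e)) -> diagonal (defect a b).
Proof. by rewrite defect_pnl; apply: offdiag_iter_ade_eq0; apply: offdiag_ade. Qed.

Lemma diagonal_defect_diagl d b : diagonal d -> diagonal (defect d b).
Proof.
move=> hd; apply: diagonal_defect_pn_e.
by rewrite /pn hd iter_ade0 defect0x; apply: diagonal0.
Qed.

Lemma diagonal_defect_diagr a d : diagonal d -> diagonal (defect a d).
Proof. by rewrite defectC; apply: diagonal_defect_diagl. Qed.

Hypothesis center12 :
  forall t, diagonal t -> (forall c, R12 c -> lie t c = 0) -> central t.
Hypothesis center21 :
  forall t, diagonal t -> (forall c, R21 c -> lie t c = 0) -> central t.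

Lemma central_defect12 a b : diagonal (defect a b) ->
  (forall c, R12 c -> diagonal (defect (pn a c) (pn b c))) -> central (defect a b).
Proof.
move=> hab hc; apply: center12 => // c c12.
apply: (offdiag_iter_ade_eq0 (k := m)); first exact/offdiag12/lie_diagonal12.
by rewrite -/(pn _ _) -defect_pnl; apply: hc.
Qed.

Lemma central_defect21 a b : diagonal (defect a b) ->
  (forall c, R21 c -> diagonal (defect (pn a c) (pn b c))) -> central (defect a b).
Proof.
move=> hab hc; apply: center21 => // c c21.
apply: (offdiag_iter_ade_eq0 (k := m)); first exact/offdiag21/lie_diagonal21.
by rewrite -/(pn _ _) -defect_pnl; apply: hc.
Qed.

Lemma central_defect_e12 x : R12 x -> central (defect e x).
Proof.
move=> hx; apply: central_defect21; first exact/diagonal_defect_diagl/diagonal_e.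
by move=> c hc; apply/diagonal_defect_diagr/diagonal_pn/diagonal_lie12_21.
Qed.

Lemma central_defect_e21 y : R21 y -> central (defect e y).
Proof.
move=> hy; apply: central_defect12; first exact/diagonal_defect_diagl/diagonal_e.
move=> c hc; apply/diagonal_defect_diagr/diagonal_pn.
by rewrite lieC; apply/diagonalN/diagonal_lie12_21.
Qed.

(* The cocycle identity with c = pn x y: the defects
   [defect (pn e y) (pn x e + pn x y)] and [defect (pn x e) (pn x y)] are
   probes of [defect e x] and [defect e y], hence vanish. *)
Lemma diagonal_defect_pn x y :
  central (defect e x) -> central (defect e y) ->
  diagonal (defect (pn e y + pn x e) (pn x y)) ->
  diagonal (defect (pn e y) (pn x e)).
Proof.
move=> hx hy hxy; apply: (diagonal_defect_split (c := pn x y)) => //.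
- have := defect_pnl e x (e + y).
  rewrite (pn_central_l _ hx) !pnDr pn_ee add0r => ->; exact: diagonal0.
- by rewrite defect_pnr (pn_central_r _ hy); apply: diagonal0.
Qed.

Lemma diagonal_defect21_12 u v : R21 u -> R12 v -> diagonal (defect u v).
Proof.
move=> hu hv; have [x hx <-] := iter_ade12_surj m.+1 hv.
have hy : R21 (- u) by apply: R21N.
have <- : pn e (- u) = u by rewrite pn_e21 ?opprK.
rewrite -pn_xe; apply: diagonal_defect_pn.
- exact: central_defect_e12.
- exact: central_defect_e21.
- exact/diagonal_defect_diagr/diagonal_pn/diagonal_lie12_21.
Qed.

Lemma diagonal_defect12_21 u v : R12 u -> R21 v -> diagonal (defect u v).
Proof. by move=> hu hv; rewrite defectC; apply: diagonal_defect21_12. Qed.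

Lemma diagonal_defect12_12 u v : R12 u -> R12 v -> diagonal (defect u v).
Proof.
move=> hu hv; have [x hx <-] := iter_ade12_surj m.+1 hv.
have [y hy <-] := iter_ade12_surj m hu.
rewrite -pn_xe -pn_e12 //; apply: diagonal_defect_pn.
- exact: central_defect_e12.
- exact: central_defect_e12.
- apply: diagonal_defect12_21; first by rewrite pn_e12 // pn_xe; apply: R12D;
    apply: R12_iter_ade.
  by rewrite /pn iter_ade21 //; apply: lie12_12.
Qed.

Lemma diagonal_defect21_21 u v : R21 u -> R21 v -> diagonal (defect u v).
Proof.
move=> hu hv; have hy : R21 (- u) by apply: R21N.
have <- : pn e (- u) = u by rewrite pn_e21 ?opprK.
have <- : pn v e = v by rewrite pn_xe iter_ade21.
apply: diagonal_defect_pn.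
- exact: central_defect_e21.
- exact: central_defect_e21.
- apply: diagonal_defect21_12; first by rewrite pn_e21 // opprK pn_xe iter_ade21 //;
    apply: R21D.
  by apply: R12_iter_ade; apply: lie21_21.
Qed.

Lemma diagonal_defect_offdiag u v : offdiag u -> offdiag v -> diagonal (defect u v).
Proof.
case=> [u1 [u2 [h1 h2 ->]]] [v1 [v2 [h3 h4 ->]]].
apply: diagonal_defect_addr.
- rewrite [u1 + u2 + v1]addrAC; apply: diagonal_defect_addl.
  + by apply: diagonal_defect12_21; [apply: R12D | apply: R21D].
  + exact: diagonal_defect21_21.
  + by apply: diagonal_defect12_21 => //; apply: R12D.
- exact: diagonal_defect12_21.
- rewrite [u1 + u2]addrC; apply: diagonal_defect_addl.
  + by apply: diagonal_defect21_12 => //; apply: R12D.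
  + exact: diagonal_defect12_12.
  + exact: diagonal_defect21_12.
Qed.

Lemma diagonal_defect a b : diagonal (defect a b).
Proof. by apply/diagonal_defect_pn_e/diagonal_defect_offdiag; apply: offdiag_pn_e. Qed.

Lemma central_defect a b : central (defect a b).
Proof. by apply: central_defect12 => [|c _]; apply: diagonal_defect. Qed.

End LieDerivation.
End Peirce.
End AlternativeRing.

Theorem theorem2p1 (R : zmodType) (mul : R -> R -> R)
  (hbi : biadditive mul) (halt : alternative mul)
  (e1 : R) (he1 : nontrivial_idempotent mul e1)
  (D : R -> R) (hD : lie_type_derivation mul D)
  (hi : forall a11 a22, peirce mul e1 true true a11 -> peirce mul e1 false false a22 ->
          (forall x, peirce mul e1 true false x -> lie mul (a11 + a22) x = 0) ->
          in_center mul (a11 + a22))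
  (hii : forall a11 a22, peirce mul e1 true true a11 -> peirce mul e1 false false a22 ->
          (forall x, peirce mul e1 false true x -> lie mul (a11 + a22) x = 0) ->
          in_center mul (a11 + a22)) :
  almost_additive mul D.
Proof.
have [[|[|m]] [// _ hder]] := hD.
have [_ [he _]] := he1.
move=> a b; apply: (central_defect hbi halt he hder).
- exact: (diagonal_central12 hbi halt he hi).
- exact: (diagonal_central21 hbi halt he hii).
Qed.
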